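(* Let $G=(V,E)$ be a graph and $[W,F]$ a non-maximal utter clique of $G$. Then the inequality $x(W)+y(F\cap E(V\setminus W))-y(E(W))\le 1$ is dominated by (i.e., is implied as a nonnegative combination of) the inequalities $x(W')+y(F'\cap E(V\setminus W'))-y(E(W'))\le 1$ for all maximal utter cliques $[W',F']$ of $G$, $y(\delta(v))\le x_v$ for all $v\in V$, and $-y_e\le 0$ for all $e\in E$.
   Context: All graphs are simple and connected. For $W\subseteq V$, $E(W)$ is the set of edges with both endpoints in $W$, $\delta(v)$ is the set of edges incident to $v$, and $x(A)=\sum_{a\in A}x_a$. The utter graph $u(G)$ has vertex set $V\cup E$, where two elements are adjacent iff: they are two adjacent vertices of $G$; or a vertex and an edge incident to it; or two edges sharing an endpoint; or a vertex $w$ and an edge $uv$ not containing $w$ with $wu\in E$ or $wv\in E$; or two disjoint edges $uv,xy$ such that some edge of $G$ joins $\{u,v\}$ to $\{x,y\}$. For $W\subseteq V$, $F\subseteq E$, $[W,F]$ is an utter clique if $W\cup F$ is a clique of $u(G)$; it is maximal if no element of $V\setminus W$ or $E\setminus F$ can be added while remaining an utter clique. *)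

From mathcomp Require Import all_boot all_order all_algebra.
Set Implicit Arguments. Unset Strict Implicit. Unset Printing Implicit Defensive.
Import Order.TTheory GRing.Theory Num.Theory.

Definition simple_graph (V : finType) (adj : rel V) : Prop :=
  symmetric adj /\ irreflexive adj.

Definition connected_graph (V : finType) (adj : rel V) : Prop :=
  forall u v : V, connect adj u v.

Definition is_edge (V : finType) (adj : rel V) (e : {set V}) : bool :=
  [exists u, exists v, adj u v && (e == [set u; v])].

Definition edge (V : finType) (adj : rel V) := {e : {set V} | is_edge adj e}.

Section Utter.
Variables (V : finType) (adj : rel V).
Local Notation E := (edge adj).

(* adjacency in the utter graph u(G), on vertex set V + E *)
Definition vv_adj (u v : V) : bool := adj u v.
Definition ve_adj (w : V) (e : E) : bool :=
  (w \in val e) || [exists u in val e, adj w u].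
Definition ee_adj (e f : E) : bool :=
  [exists u in val e, u \in val f] ||
  [exists u in val e, exists v in val f, adj u v].

Definition utter_clique (W : {set V}) (F : {set E}) : Prop :=
  (forall u v, u \in W -> v \in W -> u != v -> vv_adj u v) /\
  (forall w e, w \in W -> e \in F -> ve_adj w e) /\
  (forall e f, e \in F -> f \in F -> e != f -> ee_adj e f).

Definition maximal_utter_clique (W : {set V}) (F : {set E}) : Prop :=
  utter_clique W F /\
  (forall v, v \notin W -> ~ utter_clique (v |: W) F) /\
  (forall e, e \notin F -> ~ utter_clique W (e |: F)).

Variable R : realFieldType.
Local Open Scope ring_scope.

Definition inE_of (W : {set V}) (e : E) : bool := val e \subset W.

Definition clique_lhs (W : {set V}) (F : {set E}) (x : V -> R) (y : E -> R) : R :=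
  \sum_(v in W) x v
  + \sum_(e in F | inE_of (~: W) e) y e
  - \sum_(e : E | inE_of W e) y e.

(* left-hand side of y(δ(v)) <= x_v written as y(δ(v)) - x_v <= 0 *)
Definition star_lhs (v : V) (x : V -> R) (y : E -> R) : R :=
  \sum_(e : E | v \in val e) y e - x v.

End Utter.

From mathcomp Require Import all_boot all_order all_algebra.
From mathcomp Require Import zify ring lra.
From Stdlib Require Import Classical.
Import Order.TTheory GRing.Theory Num.Theory.
Set Bullet Behavior "Strict Subproofs".
Local Open Scope ring_scope.

(** Extend [W,F] to a maximal utter clique [W',F'].  The inequality of [W,F]
    is the inequality of [W',F'] plus the star inequalities of the vertices
    in W' \ W, plus a nonnegative multiple of each [-y_e <= 0]: the x-parts
    agree exactly, and comparing the y-coefficients edge by edge shows that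
    the remaining multiplier of [-y_e] is nonnegative.  *)

Lemma card_set2I (T : finType) (u v : T) (D : {set T}) :
  u != v -> #|[set u; v] :&: D| = ((u \in D) + (v \in D))%N.
Proof.
move=> uv; rewrite -sum1_card.
rewrite (eq_bigl (fun w => (w \in [set u; v]) && (w \in D))) => [|w]; last by rewrite inE.
by rewrite (big_mkcondr _ _ (fun w => w \in [set u; v])) /= big_setU1 ?big_set1 ?inE.
Qed.

Lemma sum_indicator (R : pzSemiRingType) (I : finType) (P : pred I) (f : I -> R) :
  \sum_i (P i)%:R * f i = \sum_(i | P i) f i.
Proof. by rewrite [RHS]big_mkcond; apply: eq_bigr => i _; case: (P i); rewrite ?mul1r ?mul0r. Qed.

Section UtterCliques.
Set Implicit Arguments.
Unset Strict Implicit.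
Variables (V : finType) (adj : rel V).
Local Notation E := (edge adj).

Lemma utter_clique_grow (W : {set V}) (F : {set E}) :
  utter_clique W F -> ~ maximal_utter_clique W F ->
  exists W1 F1, [/\ utter_clique W1 F1, W \subset W1, F \subset F1 &
    #|~: W1| + #|~: F1| < #|~: W| + #|~: F|]%N.
Proof.
move=> clWF /not_and_or [/(_ clWF) [] | /not_and_or []].
- move=> /not_all_ex_not [a /(imply_to_and (a \notin W)) [a_notin /NNPP cla]].
  exists (a |: W), F; split=> //; first exact: subsetUr.
  by have := cardsC (a |: W); have := cardsC W; rewrite cardsU1 a_notin; lia.
- move=> /not_all_ex_not [a /(imply_to_and (a \notin F)) [a_notin /NNPP cla]].
  exists W, (a |: F); split=> //; first exact: subsetUr.
  by have := cardsC (a |: F); have := cardsC F; rewrite cardsU1 a_notin; lia.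
Qed.

Lemma utter_clique_sub_maximal (W : {set V}) (F : {set E}) :
  utter_clique W F ->
  exists W' F', [/\ maximal_utter_clique W' F', W \subset W' & F \subset F'].
Proof.
have [n] := ubnP (#|~: W| + #|~: F|); elim: n W F => // n IH W F.
rewrite ltnS => size_lt clWF.
have [maxWF | nmaxWF] := classic (maximal_utter_clique W F); first by exists W, F.
have [W1 [F1 [clWF1 sWW1 sFF1 lt1]]] := utter_clique_grow clWF nmaxWF.
have [W' [F' [maxWF' sW1W' sF1F']]] := IH W1 F1 (leq_trans lt1 size_lt) clWF1.
by exists W', F'; split=> //; apply: subset_trans; eassumption.
Qed.

Context {R : realFieldType}.

Definition clique_coef (W : {set V}) (F : {set E}) (e : E) : R :=
  ((e \in F) && inE_of (~: W) e)%:R - (inE_of W e)%:R.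

Lemma clique_lhsE (W : {set V}) (F : {set E}) (x : V -> R) (y : E -> R) :
  clique_lhs W F x y = \sum_(v in W) x v + \sum_e clique_coef W F e * y e.
Proof.
rewrite /clique_lhs /clique_coef -addrA; congr (_ + _).
by under [RHS]eq_bigr do rewrite mulrBl; rewrite sumrB !sum_indicator.
Qed.

Lemma sum_star_lhs (D : {set V}) (x : V -> R) (y : E -> R) :
  \sum_(v in D) star_lhs v x y
  = \sum_e #|val e :&: D|%:R * y e - \sum_(v in D) x v.
Proof.
rewrite sumrB; congr (_ - _).
rewrite (exchange_big_dep xpredT) //=; apply: eq_bigr => e _.
rewrite (eq_bigl (fun v => v \in val e :&: D)) => [|v]; last by rewrite inE andbC.
by rewrite sumr_const mulr_natl.
Qed.

Hypothesis adj_irrefl : irreflexive adj.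

Lemma clique_coef_le (W W' : {set V}) (F F' : {set E}) (e : E) :
  W \subset W' -> F \subset F' ->
  clique_coef W F e <= clique_coef W' F' e + #|val e :&: (W' :\: W)|%:R.
Proof.
move=> /subsetP sWW' /subsetP sFF'.
have /existsP [u /existsP [v /andP [uv /eqP e_uv]]] := valP e.
have u_neq_v : u != v by apply: contraTneq uv => ->; rewrite adj_irrefl.
rewrite /clique_coef /inE_of e_uv card_set2I // !subUset !sub1set !inE.
move: (sWW' u) (sWW' v) (sFF' e).
by case: (u \in W); case: (u \in W'); case: (v \in W); case: (v \in W');
  case: (e \in F); case: (e \in F') => /= Wu Wv Fe;
  try (by have := Wu isT); try (by have := Wv isT); try (by have := Fe isT); lra.
Qed.

Lemma clique_lhs_extension (W W' : {set V}) (F F' : {set E}) (x : V -> R) (y : E -> R) :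
  W \subset W' ->
    clique_lhs W' F' x y + \sum_(v in W' :\: W) star_lhs v x y
  + \sum_e (clique_coef W' F' e + #|val e :&: (W' :\: W)|%:R - clique_coef W F e) * - y e
  = clique_lhs W F x y.
Proof.
move=> sWW'; rewrite !clique_lhsE sum_star_lhs (big_setID (A := W') W) /= (setIidPr sWW').
have -> : \sum_e (clique_coef W' F' e + #|val e :&: (W' :\: W)|%:R - clique_coef W F e) * - y e
    = \sum_e clique_coef W F e * y e - \sum_e clique_coef W' F' e * y e - \sum_e #|val e :&: (W' :\: W)|%:R * y e.
  by rewrite -!sumrB; apply: eq_bigr => e _; ring.
ring.
Qed.

End UtterCliques.

Theorem mainTheorem2 (V : finType) (adj : rel V)
    (Hsimple : simple_graph adj) (Hconn : connected_graph adj)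
    (W : {set V}) (F : {set edge adj})
    (Hcl : utter_clique W F) (Hnmax : ~ maximal_utter_clique W F)
    (R : realFieldType) :
  exists (lam : {set V} * {set edge adj} -> R) (mu : V -> R) (nu : edge adj -> R),
    (forall p, 0 <= lam p) /\ (forall v, 0 <= mu v) /\ (forall e, 0 <= nu e) /\
    (forall p, lam p != 0 -> maximal_utter_clique p.1 p.2) /\
    (forall (x : V -> R) (y : edge adj -> R),
        \sum_(p : {set V} * {set edge adj}) lam p * clique_lhs p.1 p.2 x y
      + \sum_(v : V) mu v * star_lhs v x y
      + \sum_(e : edge adj) nu e * (- y e)
      = clique_lhs W F x y) /\
    \sum_(p : {set V} * {set edge adj}) lam p * 1 + \sum_(v : V) mu v * 0
      + \sum_(e : edge adj) nu e * 0 <= 1.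
Proof.
have [W' [F' [maxWF' sWW' sFF']]] := utter_clique_sub_maximal Hcl.
pose D := W' :\: W.
exists (fun p => (p == (W', F'))%:R), (fun v => (v \in D)%:R),
  (fun e => clique_coef W' F' e + #|val e :&: D|%:R - clique_coef W F e).
have lamE (f : {set V} * {set edge adj} -> R) :
    \sum_p (p == (W', F'))%:R * f p = f (W', F').
  by rewrite sum_indicator big_pred1_eq.
split; first by move=> p; rewrite ler0n.
split; first by move=> v; rewrite ler0n.
split; first by move=> e; rewrite subr_ge0 clique_coef_le //; case: Hsimple.
split; first by move=> p; case: (eqVneq p (W', F')) => [-> //|_]; rewrite eqxx.
split; first by move=> x y; rewrite lamE sum_indicator clique_lhs_extension.
by rewrite lamE !big1 ?addr0 // => *; rewrite mulr0.
Qed.
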